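(* Let $M>0$, $g>0$, $U_{max}>0$ and $\epsilon>0$, and set $\gamma=\dfrac{\pi}{2\arctan(\epsilon U_{max})}$. For $f\in\mathbb{R}$ define $\bar\theta(f)=\sigma_{\pi/2}\big(\gamma\arctan(\epsilon f)\big)$ and $u_1(f)=\dfrac{f}{\sin\bar\theta(f)}$ for $f\neq 0$, $u_1(0)=\dfrac{1}{\gamma\epsilon}$. Let $\bar\alpha\in[0,\pi]$ be any steady-state inclination with $|Mg\cos\bar\alpha|\le U_{max}$, and let $\bar f_t=Mg\cos\bar\alpha$ be the corresponding steady-state tangential force. Then the steady-state thrust $\bar u_1=u_1(\bar f_t)$ satisfies $|\bar u_1|\le U_{max}$.
   Context: The saturation function is $\sigma_\lambda(x)=\operatorname{sign}(x)\min(|x|,\lambda)$ for $\lambda\ge 0$. Setting: a planar rigid object of inclination $\alpha$ (w.r.t. the horizon) is carried at one end by a ground vehicle and at the other end by a quadrotor producing thrust $u_1$ with constraint $0\le u_1\le U_{max}$; $M$ is the apparent mass of UAV and object and $g$ the gravitational acceleration. At an equilibrium with inclination $\bar\alpha$ the controller demands the tangential force $\bar f_t=Mg\cos\bar\alpha$, which is produced by choosing the relative UAV attitude $\bar\theta(\bar f_t)$ and thrust $u_1(\bar f_t)=\bar f_t/\sin\bar\theta(\bar f_t)$ (so that $u_1\sin\bar\theta=\bar f_t$). *)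

From Stdlib Require Import Reals Lra.
Open Scope R_scope.

Definition sat (lambda x : R) : R :=
  if Rlt_dec 0 x then Rmin x lambda
  else if Rlt_dec x 0 then - Rmin (- x) lambda
  else 0.

Definition gamma_ (eps Umax : R) : R := PI / (2 * atan (eps * Umax)).

Definition theta_bar (eps Umax f : R) : R :=
  sat (PI / 2) (gamma_ eps Umax * atan (eps * f)).

Definition u1 (eps Umax f : R) : R :=
  if Req_EM_T f 0 then 1 / (gamma_ eps Umax * eps)
  else f / sin (theta_bar eps Umax f).

(** On [0, Umax] the attitude is [theta_bar f = t * PI/2] with
    [t = atan (eps f) / atan (eps Umax)], and by concavity of atan, [f / Umax <= t].
    Jordan's inequality [t <= sin (t * PI/2)] on [0, 1] (concavity of sin) then gives
    [f <= Umax * sin (theta_bar f)], i.e. [u1 f <= Umax].  Negative forces reduce to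
    positive ones because [theta_bar] is odd and [u1] even, and the value at [f = 0] is
    [2 atan (eps Umax) / (PI eps) <= 2 Umax / PI]. *)

From Stdlib Require Import Reals Lra.
Open Scope R_scope.

Lemma concave_chord (h dh : R -> R) (b x : R) :
  0 < x <= b -> h 0 = 0 ->
  (forall c, 0 <= c <= b -> derivable_pt_lim h c (dh c)) ->
  (forall u v, 0 <= u <= v -> v <= b -> dh v <= dh u) ->
  x * h b <= b * h x.
Proof.
  intros [Hx Hxb] H0 Hder Hdecr.
  destruct (Req_dec x b) as [->|Hxb']; [lra|].
  destruct (MVT_cor2 h dh 0 x Hx) as [c1 [E1 [C1 C1']]].
  { intros c Hc; apply Hder; lra. }
  destruct (MVT_cor2 h dh x b) as [c2 [E2 [C2 C2']]]; [lra| |].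
  { intros c Hc; apply Hder; lra. }
  assert (Hslopes : dh c2 <= dh c1) by (apply Hdecr; lra).
  rewrite H0 in E1.
  (* [x h b - b h x = x (b - x) (dh c2 - dh c1)] *)
  assert (Hhx : h x = dh c1 * x) by lra.
  assert (Hhb : h b = h x + dh c2 * (b - x)) by lra.
  rewrite Hhb, Hhx.
  assert (0 <= x * (b - x)) by nra.
  nra.
Qed.

Lemma atan_pos (x : R) : 0 < x -> 0 < atan x.
Proof. intro; rewrite <- atan_0; now apply atan_increasing. Qed.

Lemma atan_le_id (x : R) : 0 <= x -> atan x <= x.
Proof.
  intros Hx; destruct (Req_dec x 0) as [->|Hx0]; [rewrite atan_0; lra|].
  destruct (MVT_cor2 atan (fun c => / (1 + c ^ 2)) 0 x) as [c [E [C C']]]; [lra| |].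
  { intros; apply derivable_pt_lim_atan. }
  rewrite atan_0 in E.
  assert (/ (1 + c ^ 2) <= 1) by (rewrite <- Rinv_1; apply Rinv_le_contravar; nra).
  nra.
Qed.

Lemma atan_chord (a b : R) : 0 < a <= b -> a * atan b <= b * atan a.
Proof.
  intros Hab; apply (concave_chord atan (fun c => / (1 + c ^ 2))); auto.
  - apply atan_0.
  - intros; apply derivable_pt_lim_atan.
  - intros u v Hu Hv; apply Rinv_le_contravar; nra.
Qed.

Lemma jordan_sin (t : R) : 0 <= t <= 1 -> t <= sin (t * (PI / 2)).
Proof.
  intros Ht; pose proof PI2_1.
  destruct (Req_dec t 0) as [->|Ht0]; [rewrite Rmult_0_l, sin_0; lra|].
  assert (Hchord : t * (PI / 2) * sin (PI / 2) <= PI / 2 * sin (t * (PI / 2))).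
  { apply (concave_chord sin cos); [split; nra | apply sin_0 | |].
    - intros; apply derivable_pt_lim_sin.
    - intros u v Hu Hv; apply cos_decr_1; lra. }
  rewrite sin_PI2 in Hchord; nra.
Qed.

Lemma sat_opp (lambda x : R) : sat lambda (- x) = - sat lambda x.
Proof.
  unfold sat.
  destruct (Rlt_dec 0 (- x)), (Rlt_dec 0 x); try lra;
    destruct (Rlt_dec (- x) 0), (Rlt_dec x 0); try lra;
    rewrite ?Ropp_involutive; ring.
Qed.

Lemma sat_id (lambda x : R) : 0 < x <= lambda -> sat lambda x = x.
Proof.
  intros Hx; unfold sat.
  destruct (Rlt_dec 0 x); [apply Rmin_left|]; lra.
Qed.

Lemma theta_bar_opp (eps Umax f : R) :
  theta_bar eps Umax (- f) = - theta_bar eps Umax f.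
Proof.
  unfold theta_bar.
  replace (eps * - f) with (- (eps * f)) by ring.
  rewrite atan_opp, <- sat_opp; f_equal; ring.
Qed.

Lemma u1_opp (eps Umax f : R) : f <> 0 -> u1 eps Umax (- f) = u1 eps Umax f.
Proof.
  intros Hf; unfold u1.
  destruct (Req_EM_T (- f) 0), (Req_EM_T f 0); try lra.
  rewrite theta_bar_opp, sin_neg; unfold Rdiv; rewrite Rinv_opp; ring.
Qed.

Lemma u1_0_bound (eps Umax : R) : 0 < eps -> 0 < Umax -> Rabs (u1 eps Umax 0) <= Umax.
Proof.
  intros He HU; pose proof PI2_1.
  unfold u1; destruct (Req_EM_T 0 0) as [_|]; [|lra].
  assert (Hpos : 0 < atan (eps * Umax)) by (apply atan_pos; nra).
  assert (Hle : atan (eps * Umax) <= eps * Umax) by (apply atan_le_id; nra).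
  replace (1 / (gamma_ eps Umax * eps)) with (2 * atan (eps * Umax) / (PI * eps))
    by (unfold gamma_; field; lra).
  rewrite Rabs_right by (apply Rle_ge, Rlt_le, Rdiv_lt_0_compat; nra).
  apply (Rmult_le_reg_r (PI * eps)); [nra|].
  unfold Rdiv; rewrite Rmult_assoc, Rinv_l by nra; nra.
Qed.

Lemma u1_pos_bound (eps Umax f : R) :
  0 < eps -> 0 < Umax -> 0 < f <= Umax -> Rabs (u1 eps Umax f) <= Umax.
Proof.
  intros He HU Hf; pose proof PI2_1.
  assert (HaU : 0 < atan (eps * Umax)) by (apply atan_pos; nra).
  set (t := atan (eps * f) / atan (eps * Umax)).
  assert (Ht_pos : 0 < t) by (apply Rdiv_lt_0_compat; [apply atan_pos; nra | lra]).
  assert (Ht_le1 : t <= 1).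
  { apply (Rmult_le_reg_r (atan (eps * Umax))); [lra|].
    unfold t, Rdiv; rewrite Rmult_assoc, Rinv_l, Rmult_1_r, Rmult_1_l by lra.
    destruct (Req_dec f Umax) as [->|]; [lra|].
    left; apply atan_increasing; nra. }
  assert (Hratio : f <= Umax * t).
  { assert (eps * f * atan (eps * Umax) <= eps * Umax * atan (eps * f))
      by (apply atan_chord; nra).
    apply (Rmult_le_reg_r (eps * atan (eps * Umax))); [nra|].
    unfold t, Rdiv.
    replace (Umax * (atan (eps * f) * / atan (eps * Umax)) * (eps * atan (eps * Umax)))
      with (eps * Umax * atan (eps * f) * (atan (eps * Umax) * / atan (eps * Umax)))
      by ring.
    rewrite Rinv_r by lra; lra. }
  assert (Htheta : theta_bar eps Umax f = t * (PI / 2)).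
  { unfold theta_bar; rewrite sat_id; unfold t, gamma_; [field; lra|].
    replace (PI / (2 * atan (eps * Umax)) * atan (eps * f)) with (t * (PI / 2))
      by (unfold t; field; lra).
    split; nra. }
  assert (Hsin : t <= sin (t * (PI / 2))) by (apply jordan_sin; lra).
  unfold u1; destruct (Req_EM_T f 0); [lra|].
  rewrite Htheta.
  rewrite Rabs_right by (apply Rle_ge, Rlt_le, Rdiv_lt_0_compat; lra).
  apply (Rmult_le_reg_r (sin (t * (PI / 2)))); [lra|].
  unfold Rdiv; rewrite Rmult_assoc, Rinv_l by lra; nra.
Qed.

Theorem lemma2 (M g Umax eps alpha_bar : R) :
  0 < M -> 0 < g -> 0 < Umax -> 0 < eps ->
  0 <= alpha_bar <= PI ->
  Rabs (M * g * cos alpha_bar) <= Umax ->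
  Rabs (u1 eps Umax (M * g * cos alpha_bar)) <= Umax.
Proof.
  intros _ _ HU He _.
  generalize (M * g * cos alpha_bar); intros f Hf.
  destruct (Rtotal_order f 0) as [Hneg | [-> | Hpos]].
  - rewrite <- u1_opp by lra.
    rewrite Rabs_left in Hf by lra.
    apply u1_pos_bound; lra.
  - now apply u1_0_bound.
  - rewrite Rabs_right in Hf by lra.
    apply u1_pos_bound; lra.
Qed.
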